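(* Let $\mathcal G$ be a Petri game with one system player whose underlying net is finite and bounded. If $\mathcal G$ has a winning, deadlock-avoiding strategy, then Player~0 has a winning strategy in the graph game $\mathit{Graph}(\mathcal G)$.
   Context: Petri nets. A Petri net is a tuple $\mathcal N=(\mathcal P,\mathcal T,\mathcal F,\mathit{In})$ where the set of places $\mathcal P$ and the set of transitions $\mathcal T$ are disjoint, the flow relation $\mathcal F$ is a multiset over $(\mathcal P\times\mathcal T)\cup(\mathcal T\times\mathcal P)$, and the initial marking $\mathit{In}$ is a finite multiset over $\mathcal P$. For a node $x$, the precondition ${}^\bullet x$ is the multiset with ${}^\bullet x(y)=\mathcal F(y,x)$ and the postcondition $x^\bullet$ is the multiset with $x^\bullet(y)=\mathcal F(x,y)$; every transition $t$ must satisfy $0<|{}^\bullet t|<\infty$ and $0<|t^\bullet|<\infty$. A marking is a finite multiset over $\mathcal P$. A transition $t$ is enabled in a marking $M$ if ${}^\bullet t\subseteq M$ (multiset inclusion); firing it yields $M'=M-{}^\bullet t+t^\bullet$, written $M\xrightarrow{t}M'$. A marking is reachable if it is obtained from $\mathit{In}$ by firing a finite sequence of transitions; $\mathcal R(\mathcal N)$ denotes the set of reachable markings. $\mathcal N$ is finite if $\mathcal P\cup\mathcal T$ is finite, $k$-bounded ($k\ge1$) if $M(p)\le k$ for all $M\in\mathcal R(\mathcal N)$ and $p\in\mathcal P$, and bounded if it is $k$-bounded for some $k$. For a function $f$ and a multiset $M$, $f[M]$ is the image multiset $f[M](y)=\sum_{x: f(x)=y}M(x)$. Occurrence nets and branching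 processes. Let $<$ be the transitive closure of $\{(x,y)\mid \mathcal F(x,y)>0\}$ and $\le$ its reflexive-transitive closure; the causal past of a node $x$ is $\lfloor x\rfloor=\{y\mid y\le x\}$, and $\lfloor S\rfloor=\bigcup_{x\in S}\lfloor x\rfloor$. Nodes $x,y$ are in conflict, $x\,\sharp\,y$, if there is a place $p\ne x,y$ and distinct transitions $t_1,t_2\in p^\bullet$ with $t_1\le x$ and $t_2\le y$. Nodes are concurrent if they are neither causally related ($x\le y$ or $y\le x$) nor in conflict. An occurrence net is a net in which pre- and postconditions of transitions are sets, every place has at most one incoming transition, $\mathit{In}=\{p\in\mathcal P\mid {}^\bullet p=\emptyset\}$, $\mathcal F^{-1}$ is well-founded, and no transition is in conflict with itself. A cut is a maximal set of pairwise concurrent places. A homomorphism from $\mathcal N_1$ to $\mathcal N_2$ is a map $\lambda:\mathcal P_1\cup\mathcal T_1\to\mathcal P_2\cup\mathcal T_2$ sending places to places and transitions to transitions with $\lambda[{}^\bullet t]={}^\bullet\lambda(t)$ and $\lambda[t^\bullet]=\lambda(t)^\bullet$ for all $t\in\mathcal T_1$; it is initial if $\lambda[\mathit{In}_1]=\mathit{In}_2$. An initial branching process of $\mathcal N$ is a pair $(\mathcal N^U,\lambda)$ with $\mathcal N^U$ an occurrence net and $\lambda$ an initial homomorphism $\mathcal N^U\to\mathcal N$ such that for all $t_1,t_2\in\mathcal T^U$, ${}^\bullet t_1={}^\bullet t_2$ and $\lambda(t_1)=\lambda(t_2)$ imply $t_1=t_2$. Petri games. A Petri game is $\mathcal G=(\mathcal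 P_S,\mathcal P_E,\mathcal T,\mathcal F,\mathit{In},\mathcal B)$ where $\mathcal P_S$ (system places) and $\mathcal P_E$ (environment places) are disjoint, $\mathcal N=(\mathcal P_S\cup\mathcal P_E,\mathcal T,\mathcal F,\mathit{In})$ is a finite Petri net (the underlying net) and $\mathcal B$ is a set of markings (bad markings). A transition $t$ is purely environmental if ${}^\bullet t\subseteq\mathcal P_E$, otherwise it is a system transition. $\mathcal G$ has one system player if every $M\in\mathcal R(\mathcal N)$ contains exactly one token on system places; that place is denoted $s_M$, and $s_M^\bullet$ is the set of transitions having $s_M$ in their precondition. A winning, deadlock-avoiding strategy for $\mathcal G$ is an initial branching process $(\mathcal N^\sigma,\lambda)$ of $\mathcal N$ such that, with $\mathcal P^\sigma_S=\lambda^{-1}(\mathcal P_S)\cap\mathcal P^\sigma$: (justified refusal) for every set $S$ of pairwise concurrent places of $\mathcal N^\sigma$ and every transition $\mathbf t$ of $\mathcal N$ with $\lambda[S]={}^\bullet\mathbf t$ such that no $t\in\mathcal T^\sigma$ has $\lambda(t)=\mathbf t$ and ${}^\bullet t=S$, there is $s\in S\cap\mathcal P^\sigma_S$ such that $\mathbf t\notin\lambda[s^\bullet]$; (safety) $\lambda[M]\notin\mathcal B$ for all $M\in\mathcal R(\mathcal N^\sigma)$; (determinism) for every $s\in\mathcal P^\sigma_S$ and every $M\in\mathcal R(\mathcal N^\sigma)$ containing $s$, at most one $t\in s^\bullet$ is enabled in $M$; (deadlock avoidance) for every $M\in\mathcal R(\mathcal N^\sigma)$, if some transition of $\mathcal N$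 is enabled in $\lambda[M]$ then some transition of $\mathcal N^\sigma$ is enabled in $M$. Graph games. A graph game $(\mathcal V_0,\mathcal V_1,\mathcal I,\mathcal E,\mathcal X)$ has disjoint vertex sets $\mathcal V_0,\mathcal V_1$ (of Players 0 and 1), initial vertex $\mathcal I$, edge relation $\mathcal E$ and bad vertices $\mathcal X$. A play is a maximal (finite or infinite) sequence $v_0v_1\dots$ with $v_0=\mathcal I$ and $(v_i,v_{i+1})\in\mathcal E$; it is won by Player~0 if no $v_i\in\mathcal X$. A strategy for Player~0 is a vertex-labeled tree whose root is labeled $\mathcal I$, where a node labeled with a $\mathcal V_1$ vertex has one child for each successor vertex and a node labeled with a $\mathcal V_0$ vertex having a successor has exactly one child labeled with one successor; it is winning if all maximal paths are labeled with plays won by Player~0. The game $\mathit{Graph}(\mathcal G)$: $\mathcal V_0=\{(M,\top)\mid M\in\mathcal R(\mathcal N)\}$, $\mathcal V_1=\{(M,c)\mid M\in\mathcal R(\mathcal N),\,c\subseteq s_M^\bullet\}$, $\mathcal I=(\mathit{In},\top)$. Edges: (E1) $(M,\top)\to(M,c)$ for every $c\subseteq s_M^\bullet$; (E2) $(M,c)\to(M',c)$ whenever some purely environmental $\mathbf t$ satisfies $M\xrightarrow{\mathbf t}M'$; (E3) $(M,c)\to(M',\top)$ whenever some system transition $\mathbf t\in c$ satisfies $M\xrightarrow{\mathbf t}M'$. Bad vertices: all $(M,c)\in\mathcal V_1$ such that (X1) $M\in\mathcal B$; or (X2a) two distinct transitions of $c$ are enabled in $M$; or (X2b) some $\mathbf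 t\in c$ is enabled in $M$ and $0<{}^\bullet\mathbf t(p)<M(p)$ for some place $p$; or (X3) some transition is enabled in $M$, every transition enabled in $M$ is a system transition, and no transition enabled in $M$ lies in $c$. *)

From HB Require Import structures.
From mathcomp Require Import all_boot.
From Stdlib Require Import Relation_Operators.
From Stdlib Require List.

Set Implicit Arguments.
Unset Strict Implicit.
Unset Printing Implicit Defensive.

(* General (possibly infinite) Petri nets.  Multisets are functions    *)
(* into nat; the flow relation is given by pre/post multiplicities.    *)

Record net : Type := Net {
  pl : Type;
  tr : Type;
  pre : tr -> pl -> nat;
  post : tr -> pl -> nat;
  init : pl -> nat
}.
Arguments pre : clear implicits.
Arguments post : clear implicits.
Arguments init : clear implicits.

Definition fin_supp (X : Type) (M : X -> nat) : Prop :=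
  exists l : seq X, forall x, 0 < M x -> List.In x l.

Definition is_net (N : net) : Prop :=
  fin_supp (init N) /\
  forall t : tr N,
    fin_supp (pre N t) /\ fin_supp (post N t) /\
    (exists p, 0 < pre N t p) /\ (exists p, 0 < post N t p).

Definition enabled (N : net) (t : tr N) (M : pl N -> nat) : Prop :=
  forall p, pre N t p <= M p.

Definition fires (N : net) (M : pl N -> nat) (t : tr N) (M' : pl N -> nat) : Prop :=
  enabled t M /\ forall p, M' p = M p - pre N t p + post N t p.

Inductive reach (N : net) : (pl N -> nat) -> Prop :=
| reach_init M : (forall p, M p = init N p) -> @reach N M
| reach_step M t M' : @reach N M -> fires M t M' -> @reach N M'.
Arguments reach : clear implicits.

Definition bounded (N : net) : Prop :=
  exists k, 0 < k /\ forall M, reach N M -> forall p, M p <= k.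

Definition node (N : net) : Type := (pl N + tr N)%type.

Definition flowrel (N : net) (x y : node N) : Prop :=
  match x, y with
  | inl p, inr t => 0 < pre N t p
  | inr t, inl p => 0 < post N t p
  | _, _ => False
  end.

Definition causal_le (N : net) : node N -> node N -> Prop :=
  clos_refl_trans (node N) (@flowrel N).

Definition conflict (N : net) (x y : node N) : Prop :=
  exists (p : pl N) (t1 t2 : tr N),
    inl p <> x /\ inl p <> y /\ t1 <> t2 /\
    0 < pre N t1 p /\ 0 < pre N t2 p /\
    causal_le (inr t1) x /\ causal_le (inr t2) y.

Definition concurrent (N : net) (x y : node N) : Prop :=
  ~ causal_le x y /\ ~ causal_le y x /\ ~ conflict x y.

Definition occurrence_net (N : net) : Prop :=
  is_net N /\
  (forall t p, pre N t p <= 1 /\ post N t p <= 1) /\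
  (forall p t1 t2, 0 < post N t1 p -> 0 < post N t2 p -> t1 = t2) /\
  (* In = { p | pre(p) = empty } *)
  (forall p, (init N p = 1 /\ forall t, post N t p = 0) \/
             (init N p = 0 /\ exists t, 0 < post N t p)) /\
  well_founded (@flowrel N) /\
  (forall t : tr N, ~ conflict (inr t) (inr t)).

Definition img_ms (X : Type) (Y : eqType) (f : X -> Y) (M : X -> nat) (N : Y -> nat) : Prop :=
  exists l : seq X, List.NoDup l /\ (forall x, 0 < M x -> List.In x l) /\
    forall y, N y = \sum_(x <- l | f x == y) M x.

Record pgame : Type := PGame {
  gpl : finType;
  gtr : finType;
  sysp : pred gpl;                   (* membership in P_S; P_E = complement *)
  gpre : gtr -> gpl -> nat;
  gpost : gtr -> gpl -> nat;
  ginit : gpl -> nat;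
  gbad : {ffun gpl -> nat} -> Prop
}.
Arguments sysp : clear implicits.

Definition under (G : pgame) : net :=
  @Net (gpl G) (gtr G) (@gpre G) (@gpost G) (@ginit G).

(* the underlying net is a Petri net (finiteness is built in) *)
Definition is_petri_game (G : pgame) : Prop := is_net (under G).

Definition purely_env (G : pgame) (t : gtr G) : Prop :=
  forall p, 0 < gpre t p -> ~~ sysp G p.

Definition system_tr (G : pgame) (t : gtr G) : Prop := ~ purely_env t.

Definition one_system_player (G : pgame) : Prop :=
  forall M, reach (under G) M -> \sum_(p | sysp G p) M p = 1.

Definition sub_sM_post (G : pgame) (M : gpl G -> nat) (c : {set gtr G}) : Prop :=
  forall t, t \in c -> exists s, sysp G s /\ 0 < M s /\ 0 < gpre t s.

Definition branching_process (G : pgame) (U : net)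
    (lP : pl U -> gpl G) (lT : tr U -> gtr G) : Prop :=
  occurrence_net U /\
  (forall t : tr U, img_ms lP (pre U t) (gpre (lT t)) /\
                    img_ms lP (post U t) (gpost (lT t))) /\
  img_ms lP (init U) (@ginit G) /\
  (forall t1 t2 : tr U, (forall p, pre U t1 p = pre U t2 p) ->
                        lT t1 = lT t2 -> t1 = t2).

Definition winning_da_strategy (G : pgame) (U : net)
    (lP : pl U -> gpl G) (lT : tr U -> gtr G) : Prop :=
  branching_process lP lT /\
  (* justified refusal; the set S is a duplicate-free list *)
  (forall (S : seq (pl U)) (t : gtr G),
     List.NoDup S ->
     (forall x y, List.In x S -> List.In y S -> x <> y ->
        concurrent (inl x : node U) (inl y)) ->
     (forall p, gpre t p = \sum_(x <- S | lP x == p) 1) ->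
     ~ (exists t' : tr U, lT t' = t /\
          forall x, (List.In x S -> pre U t' x = 1) /\
                    (~ List.In x S -> pre U t' x = 0)) ->
     exists s, List.In s S /\ sysp G (lP s) /\
       ~ (exists t' : tr U, 0 < pre U t' s /\ lT t' = t)) /\
  (forall M, reach U M -> forall B : {ffun gpl G -> nat},
     img_ms lP M B -> ~ gbad B) /\
  (forall (s : pl U) M, sysp G (lP s) -> reach U M -> 0 < M s ->
     forall t1 t2 : tr U, 0 < pre U t1 s -> 0 < pre U t2 s ->
       enabled t1 M -> enabled t2 M -> t1 = t2) /\
  (forall M, reach U M -> forall LM : gpl G -> nat, img_ms lP M LM ->
     (exists t : gtr G, @enabled (under G) t LM) ->
     exists t' : tr U, enabled t' M).

Definition has_winning_da_strategy (G : pgame) : Prop :=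
  exists (U : net) (lP : pl U -> gpl G) (lT : tr U -> gtr G),
    winning_da_strategy lP lT.

Record ggame : Type := GGame {
  gV : Type;
  gV0 : gV -> Prop;
  gV1 : gV -> Prop;
  gI : gV;
  gE : gV -> gV -> Prop;
  gX : gV -> Prop
}.

Fixpoint epath (A : Type) (E : A -> A -> Prop) (v : A) (l : seq A) : Prop :=
  match l with
  | [::] => True
  | v' :: l' => E v v' /\ epath E v' l'
  end.

Definition finite_play (Gm : ggame) (l : seq (gV Gm)) : Prop :=
  exists l', l = gI Gm :: l' /\ epath (@gE Gm) (gI Gm) l' /\
             forall v, ~ gE (last (gI Gm) l') v.

Definition infinite_play (Gm : ggame) (f : nat -> gV Gm) : Prop :=
  f 0 = gI Gm /\ forall n, gE (f n) (f n.+1).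

(* A strategy tree is represented by the set of label sequences of the
   root-to-node paths (children of a node carry distinct labels, so the
   labelled tree is determined by this set). *)
Definition is_strategy (Gm : ggame) (S : seq (gV Gm) -> Prop) : Prop :=
  S [:: gI Gm] /\
  (forall w, S w -> exists w', w = gI Gm :: w') /\
  (forall w v, S (rcons w v) -> w <> [::] -> S w) /\
  (forall w v, S (rcons w v) -> gV0 v \/ gV1 v) /\
  (forall w v, S (rcons w v) -> gV1 v ->
     forall v', S (rcons (rcons w v) v') <-> gE v v') /\
  (forall w v, S (rcons w v) -> gV0 v -> (exists v', gE v v') ->
     exists v', gE v v' /\ forall v'', S (rcons (rcons w v) v'') <-> v'' = v') /\
  (forall w v, S (rcons w v) -> gV0 v -> (forall v', ~ gE v v') ->
     forall v', ~ S (rcons (rcons w v) v')).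

Definition winning_strategy (Gm : ggame) (S : seq (gV Gm) -> Prop) : Prop :=
  is_strategy S /\
  (forall w, S w -> (forall v, ~ S (rcons w v)) ->
     finite_play w /\ forall v, List.In v w -> ~ gX v) /\
  (forall f : nat -> gV Gm, (forall n, S (mkseq f n.+1)) ->
     infinite_play f /\ forall n, ~ gX (f n)).

Definition player0_wins (Gm : ggame) : Prop :=
  exists S : seq (gV Gm) -> Prop, winning_strategy S.

(* The graph game Graph(G); None encodes the top element.               *)

Definition gvert (G : pgame) : Type := ({ffun gpl G -> nat} * option {set gtr G})%type.

Definition graph_V0 (G : pgame) (v : gvert G) : Prop :=
  match v with
  | (M, None) => reach (under G) M
  | _ => False
  end.

Definition graph_V1 (G : pgame) (v : gvert G) : Prop :=
  match v with
  | (M, Some c) => reach (under G) M /\ sub_sM_post M c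
  | _ => False
  end.

Definition graph_E (G : pgame) (v v' : gvert G) : Prop :=
  match v, v' with
  | (M, None), (M', Some c) =>
      graph_V0 v /\ M' = M /\ sub_sM_post M c
  | (M, Some c), (M', Some c') =>
      graph_V1 v /\ graph_V1 v' /\ c' = c /\
      exists t, purely_env t /\ @fires (under G) M t M'
  | (M, Some c), (M', None) =>
      graph_V1 v /\ graph_V0 v' /\
      exists t, system_tr t /\ t \in c /\ @fires (under G) M t M'
  | _, _ => False
  end.

Definition graph_X (G : pgame) (v : gvert G) : Prop :=
  match v with
  | (M, Some c) =>
      graph_V1 v /\
      ( gbad M
      \/ (exists t1 t2, t1 <> t2 /\ t1 \in c /\ t2 \in c /\
            @enabled (under G) t1 M /\ @enabled (under G) t2 M)
      \/ (exists t p, t \in c /\ @enabled (under G) t M /\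
            0 < gpre t p /\ gpre t p < M p)
      \/ ((exists t, @enabled (under G) t M) /\
          (forall t, @enabled (under G) t M -> system_tr t) /\
          (forall t, @enabled (under G) t M -> t \notin c)))
  | _ => False
  end.

Definition Graph (G : pgame) : ggame :=
  @GGame (gvert G) (@graph_V0 G) (@graph_V1 G)
         ([ffun p => ginit p], None) (@graph_E G) (@graph_X G).

(* Player 0 tracks a reachable marking K of the strategy net whose image is
   the current marking M of the game.  At a vertex (M, top) it commits to the
   labels of the strategy transitions consuming the unique marked system place
   of K.  Every move then open to Player 1, a purely environmental transition
   or a committed system transition, is mirrored in the strategy: the marked
   places of K are pairwise concurrent, so justified refusal yields a strategy
   transition with the required preset unless a system place refuses it, which
   the commitment rules out.  Safety excludes bad markings (X1), determinism at
   the system token excludes two enabled committed transitions (X2a) and a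
   committed transition with a choice of tokens on one place (X2b), and
   deadlock avoidance excludes a system-only deadlock avoiding the commitment
   (X3). *)

From Stdlib Require Import Relation_Operators Operators_Properties.
From Stdlib Require List.
From HB Require Import structures.
From mathcomp Require Import all_boot.
From mathcomp Require Import boolp.

Set Implicit Arguments.
Unset Strict Implicit.
Unset Printing Implicit Defensive.

Lemma epath_rcons (A : Type) (E : A -> A -> Prop) v l x :
  epath E v (rcons l x) <-> epath E v l /\ E (last v l) x.
Proof.
elim: l v => [|y l IH] v /=; first by split=> [[]|[]].
by rewrite IH; split=> [[? []]|[[]]].
Qed.

Lemma epath_sub (A : Type) (E E' : A -> A -> Prop) v l :
  (forall x y, E x y -> E' x y) -> epath E v l -> epath E' v l.
Proof. by move=> sub; elim: l v => [|y l IH] v //= [/sub ? /IH]. Qed.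

Lemma last_rcons_eq_cons (A : Type) (w l : seq A) v a : rcons w v = a :: l -> last a l = v.
Proof. by move=> e; rewrite -[last a l]/(last a (a :: l)) -e last_rcons. Qed.

Section InvariantStrategy.
Variables (Gm : ggame) (Inv : gV Gm -> Prop).
Hypothesis V0_V1_disjoint : forall v : gV Gm, gV0 v -> gV1 v -> False.
Hypothesis Inv_init : Inv (gI Gm).
Hypothesis Inv_owned : forall v, Inv v -> gV0 v \/ gV1 v.
Hypothesis Inv_safe : forall v, Inv v -> ~ gX v.
Hypothesis Inv_V1_closed : forall v v', Inv v -> gV1 v -> gE v v' -> Inv v'.
Hypothesis Inv_V0_move : forall v, Inv v -> gV0 v -> exists2 v', gE v v' & Inv v'.

Lemma move0_ex v : exists v', Inv v -> gV0 v -> gE v v' /\ Inv v'.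
Proof.
have [[/Inv_V0_move mv /mv [v' ? ?]]|no] := pselect (Inv v /\ gV0 v).
  by exists v'.
by exists v => ? ?; case: no.
Qed.

Definition move0 v : gV Gm := proj1_sig (cid (move0_ex v)).

Lemma move0P v : Inv v -> gV0 v -> gE v (move0 v) /\ Inv (move0 v).
Proof. exact: proj2_sig (cid (move0_ex v)). Qed.

Definition follows v v' : Prop := gE v v' /\ (gV0 v -> v' = move0 v).

Lemma follows_Inv v v' : Inv v -> follows v v' -> Inv v'.
Proof.
move=> Iv [E0 ch]; case: (Inv_owned Iv) => [V0v|V1v]; last exact: Inv_V1_closed E0.
by rewrite ch //; case: (move0P Iv V0v).
Qed.

Lemma follows_total v v0 : Inv v -> gE v v0 -> exists v', follows v v'.
Proof.
move=> Iv E0; case: (Inv_owned Iv) => [V0v|V1v].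
  by exists (move0 v); split=> //; case: (move0P Iv V0v).
by exists v0; split=> // V0v; case: (V0_V1_disjoint V0v V1v).
Qed.

Lemma epath_follows_Inv v l : Inv v -> epath follows v l ->
  forall x, List.In x (v :: l) -> Inv x.
Proof.
elim: l v => [|y l IH] v Iv /=; first by move=> _ x [<-|].
by case=> fy /(IH y (follows_Inv Iv fy)) H x [<-|/H].
Qed.

Definition follows_tree (w : seq (gV Gm)) : Prop :=
  exists l, w = gI Gm :: l /\ epath follows (gI Gm) l.

Lemma epath_follows_last v l : Inv v -> epath follows v l -> Inv (last v l).
Proof. by elim: l v => [|y l IH] v //= Iv [fy /(IH y (follows_Inv Iv fy))]. Qed.

Lemma follows_tree_last w v : follows_tree (rcons w v) -> Inv v.
Proof.
by case=> l [e p]; rewrite -(last_rcons_eq_cons e); apply: epath_follows_last.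
Qed.

Lemma follows_tree_rcons w v v' : follows_tree (rcons w v) ->
  follows_tree (rcons (rcons w v) v') <-> follows v v'.
Proof.
case=> l [e p]; have lv := last_rcons_eq_cons e; split.
  by case=> l' []; rewrite e rcons_cons => -[<-] /epath_rcons []; rewrite lv.
by move=> f; exists (rcons l v'); rewrite e; split=> //; apply/epath_rcons; rewrite lv.
Qed.

Lemma follows_tree_prefix w v : follows_tree (rcons w v) -> w <> [::] -> follows_tree w.
Proof.
case: w => [//|a w] [l []]; rewrite rcons_cons => -[-> <-] /epath_rcons [p _] _.
by exists w.
Qed.

Lemma invariant_strategy_wins : player0_wins Gm.
Proof.
exists follows_tree; split; [split|split].
- by exists [::].
- split; first by move=> w [l [-> _]]; exists l.
  split; first exact: follows_tree_prefix.
  split; first by move=> w v /follows_tree_last /Inv_owned.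
  split.
    move=> w v t V1v v'; rewrite (follows_tree_rcons _ t).
    by split=> [[]//|E0]; split=> // V0v; case: (V0_V1_disjoint V0v V1v).
  split.
    move=> w v t V0v _; have [E0 Iv'] := move0P (follows_tree_last t) V0v.
    exists (move0 v); split=> // v''; rewrite (follows_tree_rcons _ t).
    by split=> [[_ ->]|->].
  move=> w v t V0v noE v'; have [E0 _] := move0P (follows_tree_last t) V0v.
  by case: (noE _ E0).
- move=> w [l [e p]] maxw; split.
    exists l; split=> //; split; first by apply: epath_sub p => ? ? [].
    move=> v0 E0.
    have [v' f] := follows_total (epath_follows_last Inv_init p) E0.
    apply: (maxw v'); exists (rcons l v'); rewrite e; split=> //.
    exact/epath_rcons.
  by move=> v; rewrite e => /(epath_follows_Inv Inv_init p) /Inv_safe.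
- move=> f tree; have f0 : f 0 = gI Gm by case: (tree 0) => l [[]].
  have stepf n : follows (f n) (f n.+1).
    by have := tree n; rewrite mkseqS => /follows_tree_rcons <-; rewrite -!mkseqS.
  split; first by split=> // n; case: (stepf n).
  by move=> n; apply/Inv_safe/(@follows_tree_last (mkseq f n)); rewrite -mkseqS.
Qed.

End InvariantStrategy.

Section ClassicSeq.
Variable X : Type.
Implicit Types (x : {classic X}) (l : seq {classic X}).

Lemma InE x l : List.In x l <-> x \in l.
Proof.
elim: l => [|y l IH] //=; rewrite in_cons; split.
- by case=> [->|/IH ->]; rewrite ?eqxx ?orbT.
- by case/orP => [/eqP ->|/IH]; [left|right].
Qed.

Lemma NoDupE l : List.NoDup l <-> uniq l.
Proof.
elim: l => [|y l IH] /=; first by split=> // _; constructor.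
split=> [nd|/andP [/negP yl /IH ?]]; last by constructor=> // /InE.
by inversion nd; apply/andP; split; [apply/negP => /InE | apply/IH].
Qed.

Lemma big_seq_supp l1 l2 (P : pred {classic X}) (f : {classic X} -> nat) :
  uniq l1 -> uniq l2 -> (forall x, 0 < f x -> x \in l1) -> (forall x, 0 < f x -> x \in l2) ->
  \sum_(x <- l1 | P x) f x = \sum_(x <- l2 | P x) f x.
Proof.
move=> u1 u2 c1 c2.
have supp l : \sum_(x <- l | P x) f x = \sum_(x <- l | (0 < f x) && P x) f x.
  rewrite big_mkcond [RHS]big_mkcond; apply: eq_bigr => x _.
  by case: (P x); case: (f x); rewrite ?andbT ?andbF.
rewrite (supp l1) (supp l2) -[LHS]big_filter -[RHS]big_filter.
apply: perm_big; apply: uniq_perm; try exact: filter_uniq.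
by move=> x; rewrite !mem_filter; case: (ltnP 0 (f x)) => //= h; rewrite c1 ?c2.
Qed.

End ClassicSeq.

Lemma leq_add_big_seq (T : eqType) (l : seq T) (P : pred T) (f : T -> nat) x y :
  uniq l -> x \in l -> y \in l -> x != y -> P x -> P y ->
  f x + f y <= \sum_(z <- l | P z) f z.
Proof.
move=> u xl yl nxy Px Py; rewrite big_mkcond (bigD1_seq x) //= Px leq_add2l.
rewrite -big_filter (bigD1_seq y) /= ?filter_uniq //; first by rewrite Py leq_addr.
by rewrite mem_filter eq_sym nxy.
Qed.

Section ImageMultiset.
Variables (X : Type) (Y : finType) (lab : X -> Y).
Implicit Types (M K P Q : X -> nat) (N : Y -> nat) (x : {classic X}).

Definition covers M (l : seq {classic X}) := uniq l /\ forall x : {classic X}, 0 < M x -> x \in l.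

Lemma img_msE M N l : img_ms lab M N -> covers M l ->
  forall y, N y = \sum_(x <- l | lab x == y) M x.
Proof.
case=> l0 [/NoDupE u0 [c0 e0]] [u c] y; rewrite e0.
by apply: big_seq_supp => // x /c0 /InE.
Qed.

Lemma img_msI M N l : covers M l ->
  (forall y, N y = \sum_(x <- l | lab x == y) M x) -> img_ms lab M N.
Proof. by case=> u c e; exists l; split; [apply/NoDupE | split=> // x /c /InE]. Qed.

Lemma img_ms_covers M N : img_ms lab M N -> exists l, covers M l.
Proof. by case=> l [/NoDupE u [c _]]; exists l; split=> // x /c /InE. Qed.

Lemma covers_catl M l l' : covers M l -> covers M (undup (l ++ l')).
Proof. by case=> _ c; split=> [|x /c]; rewrite ?undup_uniq // mem_undup mem_cat => ->. Qed.

Lemma covers_catr M l l' : covers M l' -> covers M (undup (l ++ l')).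
Proof. by case=> _ c; split=> [|x /c]; rewrite ?undup_uniq // mem_undup mem_cat orbC => ->. Qed.

Lemma img_ms_ext M N M' N' : img_ms lab M N -> M =1 M' -> N =1 N' -> img_ms lab M' N'.
Proof.
move=> hM eM eN; have [l [u c]] := img_ms_covers hM.
apply: (@img_msI _ _ l) => [|y]; first by split=> // x; rewrite -eM; apply: c.
by rewrite -eN (img_msE hM (conj u c)); apply: eq_bigr => x _; rewrite eM.
Qed.

Lemma img_ms_le M M' N N' : img_ms lab M N -> img_ms lab M' N' ->
  (forall x, M x <= M' x) -> forall y, N y <= N' y.
Proof.
move=> hM hM' le y.
have [[l cl] [l' cl']] := (img_ms_covers hM, img_ms_covers hM').
rewrite (img_msE hM (covers_catl l' cl)) (img_msE hM' (covers_catr l cl')).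
exact: leq_sum.
Qed.

Lemma img_ms_ge M N x : img_ms lab M N -> M x <= N (lab x).
Proof.
move=> hM; have [l [u c]] := img_ms_covers hM.
have [->//|Mx] := posnP (M x).
by rewrite (img_msE hM (conj u c)) (big_rem x) ?c //= eqxx leq_addr.
Qed.

Lemma img_ms_gt0 M N y : img_ms lab M N -> 0 < N y -> exists2 x : {classic X}, lab x = y & 0 < M x.
Proof.
move=> hM; have [l cl] := img_ms_covers hM; rewrite (img_msE hM cl) => Ny.
apply: contrapT => no; move: Ny; rewrite big1 // => x /eqP lx.
by apply/eqP; rewrite -leqn0 leqNgt; apply/negP => Mx; apply: no; exists x.
Qed.

Lemma img_ms_fire K NK P NP Q NQ :
  img_ms lab K NK -> img_ms lab P NP -> img_ms lab Q NQ -> (forall x, P x <= K x) ->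
  img_ms lab (fun x => K x - P x + Q x) (fun y => NK y - NP y + NQ y).
Proof.
move=> hK hP hQ le.
have [[lK cK] [lP cP]] := (img_ms_covers hK, img_ms_covers hP).
have [lQ cQ] := img_ms_covers hQ.
set L := undup (lK ++ undup (lP ++ lQ)).
have cLK : covers K L := covers_catl _ cK.
have cLP : covers P L := covers_catr _ (covers_catl _ cP).
have cLQ : covers Q L := covers_catr _ (covers_catr _ cQ).
apply: (@img_msI _ _ L).
  split; first by case: cLK.
  move=> x; rewrite addn_gt0 subn_gt0 => /orP [/(leq_ltn_trans (leq0n _))|].
    by case: cLK => _; apply.
  by case: cLQ => _; apply.
move=> y; rewrite (img_msE hK cLK) (img_msE hP cLP) (img_msE hQ cLQ).
by rewrite big_split /= sumnB.
Qed.

Lemma sum_img_ms M N (S : pred Y) l : img_ms lab M N -> covers M l ->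
  \sum_(y | S y) N y = \sum_(x <- l | S (lab x)) M x.
Proof.
move=> hM cl; rewrite (eq_bigr _ (fun y _ => img_msE hM cl y)).
rewrite (exchange_big_dep (fun x => S (lab x))) /= => [|y x Sy /eqP ->] //.
apply: eq_bigr => x Sx; rewrite (big_pred1 (lab x)) // => y /=.
by case: (eqVneq y (lab x)) => [->|]; rewrite ?Sx ?andbF.
Qed.

End ImageMultiset.

Section LabelSelection.
Variables (X Y : eqType) (lab : X -> Y).

Definition lab_count (s : seq X) (y : Y) := count (fun x => lab x == y) s.

Fixpoint select (need : Y -> nat) (l : seq X) : seq X :=
  match l with
  | [::] => [::]
  | x :: r => let need' y := need y - (lab x == y) in
      if 0 < need (lab x) then x :: select need' r else select need' r
  end.

Lemma select_subseq need l : subseq (select need l) l.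
Proof.
elim: l need => [|x l IH] need //=.
by case: ifP => _; [rewrite eqxx | apply: subseq_trans (IH _) (subseq_cons _ _)].
Qed.

Lemma lab_count_select need l y :
  lab_count (select need l) y = minn (need y) (lab_count l y).
Proof.
elim: l need => [|x l IH] need /=; first by rewrite minn0.
case: ifP => hn /=; rewrite IH; case: (eqVneq (lab x) y) => [<-|_] /=.
- by rewrite subn1 add1n -minnSS prednK.
- by rewrite !subn0.
- by move: hn; rewrite lt0n => /negbFE/eqP ->; rewrite sub0n !min0n.
- by rewrite !subn0.
Qed.

Lemma lab_count_select_exact need l :
  (forall y, need y <= lab_count l y) -> forall y, lab_count (select need l) y = need y.
Proof. by move=> le y; rewrite lab_count_select; apply/minn_idPl. Qed.

End LabelSelection.

Section OccurrenceNet.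
Variable U : net.
Hypothesis HU : occurrence_net U.
Implicit Types (K : pl U -> nat) (C : tr U -> Prop).

Lemma occ_pre_le1 t p : pre U t p <= 1.
Proof. by case: HU => _ [h _]; case: (h t p). Qed.

Lemma occ_post_le1 t p : post U t p <= 1.
Proof. by case: HU => _ [h _]; case: (h t p). Qed.

Lemma occ_post_inj t1 t2 p : 0 < post U t1 p -> 0 < post U t2 p -> t1 = t2.
Proof. by case: HU => _ [_ [h _]]; apply: h. Qed.

Lemma occ_init p : (init U p = 1 /\ forall t, post U t p = 0) \/
                   (init U p = 0 /\ exists t, 0 < post U t p).
Proof. by case: HU => _ [_ [_ [h _]]]. Qed.

Lemma occ_pre_neq0 t : exists p, 0 < pre U t p.
Proof. by case: HU => [[_ h] _]; case: (h t) => _ [_ []]. Qed.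

Definition produced C p := init U p = 1 \/ exists2 t, C t & 0 < post U t p.
Definition consumed C p := exists2 t, C t & 0 < pre U t p.
Definition add_tr C t0 t := C t \/ t = t0.

(* [C] stands for the set of transitions fired so far to reach [K]. *)
Record firing_history K C : Prop := {
  history_le1 : forall p, K p <= 1;
  history_marked : forall p, 0 < K p <-> produced C p /\ ~ consumed C p;
  history_pre_produced : forall t p, C t -> 0 < pre U t p -> produced C p;
  history_conflict_free : forall t1 t2 p, C t1 -> C t2 ->
    0 < pre U t1 p -> 0 < pre U t2 p -> t1 = t2 }.

Lemma history_init : firing_history (init U) (fun _ => False).
Proof.
split=> [p|p|t p []|t1 t2 p []].
  by case: (occ_init p) => [[-> _]|[-> _]].
rewrite /produced /consumed; split=> [Ip|[[->//|[]//]]].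
split=> [|[]//]; left; case: (occ_init p) => [[]//|[I0]]; by rewrite I0 in Ip.
Qed.

Lemma produced_add C t p : produced (add_tr C t) p <-> produced C p \/ 0 < post U t p.
Proof.
rewrite /produced /add_tr; split=> [[|[t' [Ct'|->]]]|[[|[t' Ct' pt']]|pt]]; auto.
- by move=> ?; left; right; exists t'.
- by right; exists t'; first left.
- by right; exists t; first right.
Qed.

Lemma consumed_add C t p : consumed (add_tr C t) p <-> consumed C p \/ 0 < pre U t p.
Proof.
rewrite /consumed /add_tr; split=> [[t' [Ct'|->]]|[[t' Ct' pt']|pt]]; auto.
- by move=> ?; left; exists t'.
- by exists t'; first left.
- by exists t; first right.
Qed.

Section HistoryStep.
Variables (K K' : pl U -> nat) (C : tr U -> Prop) (t : tr U).
Hypotheses (hist : firing_history K C) (fire : fires K t K').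

Lemma history_consumed_unmarked p : consumed C p -> K p = 0.
Proof.
move=> cp; apply/eqP; rewrite -leqn0 leqNgt; apply/negP.
by move/(history_marked hist) => [].
Qed.

Lemma history_pre_marked p : 0 < pre U t p -> 0 < K p.
Proof. by move=> pt; apply: leq_trans pt (fire.1 p). Qed.

Lemma history_fresh_tr : ~ C t.
Proof.
move=> Ct; have [p pt] := occ_pre_neq0 t.
by have := history_pre_marked pt; rewrite history_consumed_unmarked //; exists t.
Qed.

Lemma history_post_unproduced p : 0 < post U t p -> ~ produced C p.
Proof.
move=> pt [Ip|[t' Ct' pt']].
  by case: (occ_init p) => [[_ P0]|[I0 _]]; [rewrite P0 in pt | rewrite I0 in Ip].
by apply: history_fresh_tr; rewrite -(occ_post_inj pt' pt).
Qed.

Lemma history_post_unmarked p : 0 < post U t p -> K p = 0.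
Proof.
move=> pt; apply/eqP; rewrite -leqn0 leqNgt; apply/negP.
by move/(history_marked hist) => [/(history_post_unproduced pt)].
Qed.

Lemma history_pre_post_disjoint p : 0 < post U t p -> pre U t p = 0.
Proof.
move=> pt; apply/eqP; rewrite -leqn0 leqNgt; apply/negP => /history_pre_marked.
by rewrite history_post_unmarked.
Qed.

Lemma history_step_le1 p : K' p <= 1.
Proof.
rewrite fire.2; have [P0|pt] := posnP (post U t p).
  by rewrite P0 addn0 (leq_trans (leq_subr _ _) (history_le1 hist p)).
by rewrite history_post_unmarked // history_pre_post_disjoint // occ_post_le1.
Qed.

Lemma history_step_marked p :
  0 < K' p <-> produced (add_tr C t) p /\ ~ consumed (add_tr C t) p.
Proof.
rewrite fire.2 produced_add consumed_add; have [P0|pt] := posnP (post U t p); last first.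
  rewrite history_post_unmarked // history_pre_post_disjoint // add0n pt.
  split=> // _; split; first by right.
  case=> [[t' Ct' pt']|//].
  exact: history_post_unproduced pt (history_pre_produced hist Ct' pt').
rewrite P0 addn0; have [Q0|qt] := posnP (pre U t p).
  rewrite Q0 subn0 (history_marked hist).
  split=> [[pr nc]|[[pr|//] nc]]; split; [by left | by case | done | by move=> cp; apply: nc; left].
have K1 : K p = 1 by apply/eqP; rewrite eqn_leq (history_le1 hist) history_pre_marked.
have Q1 : pre U t p = 1 by apply/eqP; rewrite eqn_leq occ_pre_le1.
by rewrite K1 Q1 subnn; split=> // -[_ []]; right.
Qed.

Lemma history_step : firing_history K' (add_tr C t).
Proof.
split; [exact: history_step_le1 | exact: history_step_marked | |].
- move=> t' p [Ct'|->] pt'; apply/produced_add; left.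
    exact: (history_pre_produced hist Ct' pt').
  by have /(history_marked hist) [] := history_pre_marked pt'.
- move=> t1 t2 p [C1|->] [C2|->] p1 p2 //; first exact: (history_conflict_free hist C1 C2 p1 p2).
  + by have := history_pre_marked p2; rewrite history_consumed_unmarked //; exists t1.
  + by have := history_pre_marked p1; rewrite history_consumed_unmarked //; exists t2.
Qed.

End HistoryStep.

Lemma reach_history K : reach U K -> exists C, firing_history K C.
Proof.
elim=> [M eM | M t M' _ [C hC] fire].
  by exists (fun _ => False); rewrite (funext eM); apply: history_init.
by exists (add_tr C t); apply: history_step hC fire.
Qed.

Lemma reach_le1 K p : reach U K -> K p <= 1.
Proof. by case/reach_history => C hC; apply: history_le1 hC p. Qed.

Definition in_history C (n : node U) : Prop :=
  match n with inl p => produced C p | inr t => C t end.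

Lemma history_causal_closed K C a b :
  firing_history K C -> causal_le a b -> in_history C b -> in_history C a.
Proof.
move=> hC; elim=> {a b} [[p|t] [q|t'] //= ab|//|a b c _ IHab _ IHbc /IHbc /IHab //].
  by move=> Ct'; apply: (history_pre_produced hC Ct' ab).
case=> [Iq|[t0 Ct0 qt0]]; last by rewrite (occ_post_inj ab qt0).
by case: (occ_init q) => [[_ P0]|[I0 _]]; [rewrite P0 in ab | rewrite I0 in Iq].
Qed.

(* A marked place cannot precede another one: the first step out of it is a
   consumer, which the later place forces into the history. *)
Lemma history_marked_incomparable K C a b : firing_history K C ->
  0 < K a -> 0 < K b -> a <> b -> ~ causal_le (inl a : node U) (inl b).
Proof.
move=> hC Ka Kb nab /clos_rt_rt1n_iff ab.
inversion ab as [|n z an nb]; subst; first by apply: nab.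
case: n an nb => [//|t] /= ta tb.
have Ct : C t.
  apply: (history_causal_closed hC (clos_rt1n_rt _ _ _ _ tb)).
  by case: ((history_marked hC b).1 Kb).
by case: ((history_marked hC a).1 Ka) => _; apply; exists t.
Qed.

Lemma reach_concurrent K x y : reach U K -> 0 < K x -> 0 < K y -> x <> y ->
  concurrent (inl x : node U) (inl y).
Proof.
case/reach_history => C hC Kx Ky nxy.
split; first exact: history_marked_incomparable hC Kx Ky nxy.
split; first by apply: history_marked_incomparable hC Ky Kx _ => yx; apply: nxy.
case=> p [t1 [t2 [_ [_ [n12 [p1 [p2 [c1 c2]]]]]]]]; apply: n12.
apply: (history_conflict_free hC _ _ p1 p2).
  by apply: (history_causal_closed hC c1); case: ((history_marked hC x).1 Kx).
by apply: (history_causal_closed hC c2); case: ((history_marked hC y).1 Ky).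
Qed.

End OccurrenceNet.

Section Strategy.
Variables (G : pgame) (U : net) (lP : pl U -> gpl G) (lT : tr U -> gtr G).
Hypothesis one_sys : one_system_player G.
Hypothesis strat : winning_da_strategy lP lT.
Implicit Types (K : pl U -> nat) (M : gpl G -> nat) (x y s : {classic (pl U)}).

Lemma strategy_occ : occurrence_net U.
Proof. by case: strat => [[]]. Qed.

Lemma hom_pre t : img_ms lP (pre U t) (@gpre G (lT t)).
Proof. by case: strat => [[_ [h _]] _]; case: (h t). Qed.

Lemma hom_post t : img_ms lP (post U t) (@gpost G (lT t)).
Proof. by case: strat => [[_ [h _]] _]; case: (h t). Qed.

Lemma hom_init : img_ms lP (init U) (@ginit G).
Proof. by case: strat => [[_ [_ [? _]]] _]. Qed.

Definition sys_post_labels K : {set gtr G} :=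
  [set t | `[< exists s t', [/\ 0 < K s, sysp G (lP s), 0 < pre U t' s & lT t' = t] >]].

Lemma sys_post_labelsP K t : reflect
  (exists s t', [/\ 0 < K s, sysp G (lP s), 0 < pre U t' s & lT t' = t])
  (t \in sys_post_labels K).
Proof. by rewrite inE; apply: asboolP. Qed.

Local Notation lab_count_P := (@lab_count {classic (pl U)} (gpl G) lP).

Local Notation select_P := (@select {classic (pl U)} (gpl G) lP).

Lemma system_tr_sys_pre t : system_tr (lT t) -> exists2 x, sysp G (lP x) & 0 < pre U t x.
Proof.
move=> st; have [p pt sp] : exists2 p, 0 < gpre (lT t) p & sysp G p.
  by apply: contrapT => no; apply: st => p pt; apply/negP => sp; apply: no; exists p.
by have [x xp ?] := img_ms_gt0 (hom_pre t) pt; exists x; rewrite ?xp.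
Qed.

Lemma sys_post_labels_system K t : t \in sys_post_labels K -> system_tr t.
Proof.
case/sys_post_labelsP => s [t' [_ ss st' <-]] env.
by move: (env _ (leq_trans st' (img_ms_ge s (hom_pre t')))); rewrite ss.
Qed.

Lemma sys_post_labels_sub K M : img_ms lP K M -> sub_sM_post M (sys_post_labels K).
Proof.
move=> imgK t /sys_post_labelsP [s [t' [Ks ss st' <-]]]; exists (lP s).
split=> //; split; first exact: leq_trans Ks (img_ms_ge s imgK).
exact: leq_trans st' (img_ms_ge s (hom_pre t')).
Qed.

Lemma mirror_enabled K t (S : seq {classic (pl U)}) : (forall x, x \in S -> 0 < K x) ->
  (forall x, pre U t x = (x \in S)) -> enabled t K.
Proof. by move=> SK preS x; rewrite preS; case: (boolP (x \in S)) => // /SK. Qed.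

Definition enumerates K (l : seq {classic (pl U)}) := uniq l /\ forall x, (x \in l) = (0 < K x).

Section Marking.
Variables (K : pl U -> nat) (M : gpl G -> nat).
Hypotheses (reachK : reach U K) (imgK : img_ms lP K M) (reachM : reach (under G) M).

Lemma marked_sys_unique x y :
  0 < K x -> 0 < K y -> sysp G (lP x) -> sysp G (lP y) -> x = y.
Proof.
move=> Kx Ky sx sy; apply: contrapT => /eqP nxy.
have [l [u c]] := img_ms_covers imgK.
have := one_sys reachM; rewrite (sum_img_ms _ imgK (conj u c)) => one.
have := @leq_add_big_seq _ l (fun z => sysp G (lP z)) K x y u (c x Kx) (c y Ky) nxy sx sy.
by rewrite one; apply/negP; rewrite -ltnNge (leq_add Kx Ky).
Qed.

Lemma marked_sys_exists : exists2 s, 0 < K s & sysp G (lP s).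
Proof.
have [p sp Mp] : exists2 p, sysp G p & 0 < M p.
  apply: contrapT => no; move: (one_sys reachM); rewrite big1 // => p sp.
  by apply/eqP; rewrite -leqn0 leqNgt; apply/negP => Mp; apply: no; exists p.
by have [x lx Kx] := img_ms_gt0 imgK Mp; exists x; rewrite ?lx.
Qed.

Lemma enumerates_ex : exists l, enumerates K l.
Proof.
have [l [u c]] := img_ms_covers imgK.
exists [seq x <- l | 0 < K x]; split=> [|x]; first exact: filter_uniq.
by rewrite mem_filter; case: ltnP => //= /c ->.
Qed.

Lemma lab_count_enumerates l q : enumerates K l -> lab_count_P l q = M q.
Proof.
move=> [u e]; rewrite (img_msE imgK (l := l)); last by split=> // x; rewrite e.
rewrite /lab_count -sum1_count [LHS]big_seq_cond [RHS]big_seq_cond; apply: eq_bigr => x.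
by rewrite e => /andP [Kx _]; apply/esym/eqP; rewrite eqn_leq Kx (reach_le1 strategy_occ _ reachK).
Qed.

Lemma mirror t (S : seq {classic (pl U)}) : purely_env t \/ t \in sys_post_labels K ->
  uniq S -> (forall x, x \in S -> 0 < K x) -> (forall q, gpre t q = lab_count_P S q) ->
  exists2 t'', lT t'' = t & forall x, pre U t'' x = (x \in S).
Proof.
move=> choice uS SK cnt; apply: contrapT => no.
have [_ [refusal _]] := strat.
have conc x y : List.In x S -> List.In y S -> x <> y -> concurrent (inl x : node U) (inl y).
  by move=> /InE /SK Kx /InE /SK Ky; apply: (reach_concurrent strategy_occ reachK Kx Ky).
have no_mirror : ~ exists t'', lT t'' = t /\ forall x,
    (List.In x S -> pre U t'' x = 1) /\ (~ List.In x S -> pre U t'' x = 0).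
  case=> t'' [et ht]; apply: no; exists t'' => // x; case: (boolP (x \in S)) => xS.
    by rewrite (ht x).1 //; apply/InE.
  by rewrite (ht x).2 // => /InE; apply/negP.
have cnt1 q : gpre t q = \sum_(x <- S | lP x == q) 1 by rewrite sum1_count cnt.
have [s [/InE sS [ss refused]]] := refusal S t (proj2 (NoDupE S) uS) conc cnt1 no_mirror.
case: choice => [env|/sys_post_labelsP [s0 [t' [Ks0 ss0 s0t' et']]]].
  have : 0 < gpre t (lP s) by rewrite cnt -has_count; apply/hasP; exists s.
  by move/env; rewrite ss.
have s0s := marked_sys_unique Ks0 (SK _ sS) ss0 ss.
by apply: refused; exists t'; rewrite -s0s.
Qed.

Lemma mirror_select t l : purely_env t \/ t \in sys_post_labels K ->
  uniq l -> (forall x, x \in l -> 0 < K x) -> (forall q, gpre t q <= lab_count_P l q) ->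
  exists2 t'', lT t'' = t & forall x, pre U t'' x = (x \in select_P (gpre t) l).
Proof.
move=> choice u lK le; apply: mirror => //.
- exact: subseq_uniq (select_subseq _ _ _) u.
- by move=> x /(mem_subseq (select_subseq _ _ _)) /lK.
- by move=> q; rewrite lab_count_select_exact.
Qed.

Lemma enabled_mirror t : enabled (N := under G) t M ->
  purely_env t \/ t \in sys_post_labels K -> exists2 t'', lT t'' = t & enabled t'' K.
Proof.
move=> en choice; have [l [u e]] := enumerates_ex.
have lK x : x \in l -> 0 < K x by rewrite e.
have [|t'' et pre_t''] := mirror_select choice u lK.
  by move=> q; rewrite (lab_count_enumerates _ (conj u e)); apply: en.
exists t'' => //; apply: mirror_enabled pre_t'' => x.
by move/(mem_subseq (select_subseq _ _ _)) /lK.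
Qed.

Lemma mirror_firing t M' : purely_env t \/ t \in sys_post_labels K ->
  fires (N := under G) M t M' ->
  exists t'' K', [/\ lT t'' = t, fires K t'' K' & img_ms lP K' M'].
Proof.
move=> choice [en eM']; have [t'' et en''] := enabled_mirror en choice.
exists t'', (fun x => K x - pre U t'' x + post U t'' x); split=> //.
have := img_ms_fire imgK (hom_pre t'') (hom_post t'') en''.
by rewrite et => /img_ms_ext; apply=> // q; rewrite eM'.
Qed.

Lemma enabled_system_unique t1 t2 : enabled t1 K -> enabled t2 K ->
  system_tr (lT t1) -> system_tr (lT t2) -> t1 = t2.
Proof.
move=> en1 en2 /system_tr_sys_pre [x1 sx1 px1] /system_tr_sys_pre [x2 sx2 px2].
have Kx1 := leq_trans px1 (en1 x1); have Kx2 := leq_trans px2 (en2 x2).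
have [_ [_ [_ [det _]]]] := strat.
rewrite -(marked_sys_unique Kx1 Kx2 sx1 sx2) in px2.
exact: (det x1 K sx1 reachK Kx1 _ _ px1 px2 en1 en2).
Qed.

Lemma sys_post_labels_enabled_unique t1 t2 : t1 \in sys_post_labels K -> t2 \in sys_post_labels K ->
  enabled (N := under G) t1 M -> enabled (N := under G) t2 M -> t1 = t2.
Proof.
move=> c1 c2 en1 en2.
have [t1'' e1 en1''] := enabled_mirror en1 (or_intror c1).
have [t2'' e2 en2''] := enabled_mirror en2 (or_intror c2).
rewrite -e1 -e2 in c1 c2 *; congr lT.
exact: enabled_system_unique en1'' en2'' (sys_post_labels_system c1) (sys_post_labels_system c2).
Qed.

(* Otherwise one mirror of [t] consumes the token on a place labelled [p]
   and another one does not, against determinism. *)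
Lemma sys_post_labels_enabled_consumes_all t p : t \in sys_post_labels K ->
  enabled (N := under G) t M -> 0 < gpre t p -> M p <= gpre t p.
Proof.
move=> c en pt; rewrite leqNgt; apply/negP => lt.
have [x xp Kx] := img_ms_gt0 imgK (ltn_trans pt lt).
have [l [u e]] := enumerates_ex; have lK y : y \in l -> 0 < K y by rewrite e.
have xl : x \in l by rewrite e.
have cnt q : lab_count_P l q = M q := lab_count_enumerates _ (conj u e).
have lK1 y : y \in x :: rem x l -> 0 < K y.
  by rewrite -(perm_mem (perm_to_rem xl)); apply: lK.
have [|||t1 e1 pre1] := mirror_select (l := x :: rem x l) (or_intror c).
- by rewrite -(perm_uniq (perm_to_rem xl)).
- exact: lK1.
- by move=> q; rewrite /lab_count -(permP (perm_to_rem xl)) -/(lab_count _ _ _) cnt; apply: en.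
have [|||t2 e2 pre2] := mirror_select (l := rem x l) (or_intror c).
- exact: rem_uniq.
- by move=> y /mem_rem /lK.
- move=> q; rewrite /lab_count count_rem xl /= -/(lab_count _ _ _) cnt.
  case: (eqVneq (lP x) q) => [<-|_]; last by rewrite subn0; apply: en.
  by rewrite xp subn1 -ltnS prednK // (ltn_trans pt lt).
have en1 : enabled t1 K.
  by apply: mirror_enabled pre1 => y /(mem_subseq (select_subseq _ _ _)) /lK1.
have en2 : enabled t2 K.
  by apply: mirror_enabled pre2 => y /(mem_subseq (select_subseq _ _ _)) /mem_rem /lK.
have st : system_tr t := sys_post_labels_system c.
have t12 : t1 = t2 by apply: enabled_system_unique; rewrite ?e1 ?e2.
have x_out : x \notin select_P (gpre t) (rem x l).
  by apply/negP => /(mem_subseq (select_subseq _ _ _)); rewrite mem_rem_uniqF.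
by have := pre1 x; rewrite t12 pre2 (negbTE x_out) /= xp pt mem_head.
Qed.

Lemma sys_post_labels_enabled_ex : (exists t, enabled (N := under G) t M) ->
  (forall t, enabled (N := under G) t M -> system_tr t) ->
  exists2 t, t \in sys_post_labels K & enabled (N := under G) t M.
Proof.
move=> ex sys; have [_ [_ [_ [_ live]]]] := strat.
have [t' en'] := live K reachK M imgK ex.
have en : enabled (N := under G) (lT t') M by apply: img_ms_le (hom_pre t') imgK en'.
exists (lT t') => //; have [x sx px] := system_tr_sys_pre (sys _ en).
by apply/sys_post_labelsP; exists x, t'; split=> //; apply: leq_trans px (en' x).
Qed.

End Marking.

Lemma sys_post_labels_env_step K M t K' M' :
  reach U K -> img_ms lP K M -> reach (under G) M ->
  img_ms lP K' M' -> reach (under G) M' ->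
  purely_env (lT t) -> fires K t K' -> sys_post_labels K' = sys_post_labels K.
Proof.
move=> reachK imgK reachM imgK' reachM' env fire.
have reachK' := reach_step reachK fire.
have keep s : sysp G (lP s) -> 0 < K s -> 0 < K' s.
  move=> ss Ks; rewrite fire.2; apply: leq_trans (leq_addr _ _).
  have [P0|pt] := posnP (pre U t s); first by rewrite P0 subn0.
  by move: (env _ (leq_trans pt (img_ms_ge s (hom_pre t)))); rewrite ss.
have [s0 Ks0 ss0] := marked_sys_exists imgK reachM.
have marked_sys s : 0 < K' s -> sysp G (lP s) -> s = s0.
  by move=> K's ss; apply: (marked_sys_unique imgK' reachM' K's (keep _ ss0 Ks0)).
apply/setP => t0; apply/sys_post_labelsP/sys_post_labelsP.
  case=> s [t' [K's ss st' <-]]; have e := marked_sys s K's ss; subst s.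
  by exists s0, t'.
case=> s [t' [Ks ss st' <-]]; exists s, t'; split=> //; exact: keep.
Qed.

Definition simulates (v : gvert G) K : Prop :=
  [/\ reach U K, img_ms lP K v.1, reach (under G) v.1 &
      forall c, v.2 = Some c -> c = sys_post_labels K].

Lemma simulates_init : simulates (gI (Graph G)) (init U).
Proof.
have eI (p : gpl G) : [ffun p => ginit p] p = ginit p by rewrite ffunE.
split=> //; first exact: reach_init.
  exact: img_ms_ext hom_init (frefl _) (fun p => esym (eI p)).
exact: reach_init.
Qed.

Lemma simulates_owned v K : simulates v K -> graph_V0 v \/ graph_V1 v.
Proof.
case: v => M [c|] [_ imgK reachM choice] /=; last by left.
by right; split=> //; rewrite (choice c erefl); apply: sys_post_labels_sub imgK.
Qed.

Lemma simulates_safe v K : simulates v K -> ~ graph_X v.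
Proof.
case: v => M [c|] [reachK imgK reachM choice] //= [_].
rewrite (choice c erefl).
case=> [bad|[[t1 [t2 [n12 [c1 [c2 [en1 en2]]]]]]|[[t [p [ct [en [pt lt]]]]]|[ex [sys stuck]]]]].
- by have [_ [_ [safe _]]] := strat; apply: safe reachK _ imgK bad.
- exact: n12 (sys_post_labels_enabled_unique reachK imgK reachM c1 c2 en1 en2).
- by move: lt; rewrite ltnNge (sys_post_labels_enabled_consumes_all reachK imgK reachM ct en pt).
- have [t ct en] := sys_post_labels_enabled_ex reachK imgK ex sys.
  by move: (stuck t en); rewrite ct.
Qed.

Lemma simulates_V1_step v v' K : simulates v K -> graph_V1 v -> graph_E v v' ->
  exists K', simulates v' K'.
Proof.
case: v v' => M [c|] [M' [c'|]] [reachK imgK reachM choice] //= _.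
- case=> _ [[reachM' _] [-> [t [env fire]]]].
  have [t'' [K' [et fire' imgK']]] := mirror_firing reachK imgK reachM (or_introl env) fire.
  exists K'; split=> //; first exact: reach_step reachK fire'.
  move=> _ [<-]; rewrite (choice c erefl); apply/esym.
  by apply: sys_post_labels_env_step reachK imgK reachM imgK' reachM' _ fire'; rewrite et.
- case=> _ [reachM' [t [_ [ct fire]]]].
  have choice' : t \in sys_post_labels K by rewrite -(choice c erefl).
  have [t'' [K' [_ fire' imgK']]] := mirror_firing reachK imgK reachM (or_intror choice') fire.
  by exists K'; split=> //; apply: reach_step reachK fire'.
Qed.

Lemma simulates_V0_move v K : simulates v K -> graph_V0 v ->
  exists2 v', graph_E v v' & exists K', simulates v' K'.
Proof.
case: v => M [c|] [reachK imgK reachM _] //= _.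
exists (M, Some (sys_post_labels K)); last by exists K; split=> // c [<-].
by split=> //; split=> //; apply: sys_post_labels_sub imgK.
Qed.

End Strategy.

Theorem theorem1 (G : pgame) :
  is_petri_game G ->
  one_system_player G ->
  bounded (under G) ->
  has_winning_da_strategy G ->
  player0_wins (Graph G).
Proof.
move=> _ one_sys _ [U [lP [lT strat]]].
apply: (@invariant_strategy_wins (Graph G) (fun v => exists K, simulates lP lT v K)).
- by case=> M [c|].
- by exists (init U); apply: simulates_init strat.
- by move=> v [K /(simulates_owned strat)].
- by move=> v [K /(simulates_safe one_sys strat)].
- by move=> v v' [K simK] V1v; apply: (simulates_V1_step one_sys strat simK V1v).
- by move=> v [K simK]; apply: (simulates_V0_move strat simK).
Qed.
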